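(* Let $N\ge1$, $d\ge1$, $H\in(0,1)^N$ and let $v$ be an $(N,d)$-fractional Brownian sheet with Hurst parameter $H$. If $x^1,\dots,x^m\in(0,\infty)^N$ are distinct points, then the real random variables $v_1(x^1),\dots,v_1(x^m)$ are linearly independent.
   Context: An $(N,d)$-fractional Brownian sheet with Hurst parameter $H\in(0,1)^N$ is an $\mathbb{R}^d$-valued continuous centered Gaussian field $\{v(x),x\in\mathbb{R}^N_+\}$ with $\mathrm E(v_j(x)v_\ell(y))=\delta_{j,\ell}\prod_{i=1}^N\frac12(|x_i|^{2H_i}+|y_i|^{2H_i}-|x_i-y_i|^{2H_i})$; $v_1$ denotes its first component. *)

From HB Require Import structures.
From mathcomp Require Import all_boot all_order all_algebra.
From mathcomp Require Import all_classical all_reals all_analysis.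
Set Implicit Arguments. Unset Strict Implicit. Unset Printing Implicit Defensive.
Import Order.TTheory GRing.Theory Num.Theory.
Import numFieldNormedType.Exports.
Local Open Scope classical_set_scope.
Local Open Scope ring_scope.

Definition orthant (R : realType) (N : nat) : set 'rV[R]_N :=
  [set x | forall i : 'I_N, 0 <= x ord0 i].

Definition gaussian_rv (dm : measure_display) (T : measurableType dm)
    (R : realType) (P : probability T R) (Y : T -> R) (m s : R) : Prop :=
  [/\ 0 <= s, measurable_fun setT Y &
   forall A : set R, measurable A ->
     P (Y @^-1` A) = (if s == 0 then \d_m A else normal_prob m s A)].

Definition fbs_cov (R : realType) (N : nat) (H : 'I_N -> R) (x y : 'rV[R]_N) : R :=
  \prod_(i < N) (2^-1 * (`|x ord0 i| `^ (2 * H i) + `|y ord0 i| `^ (2 * H i)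
                          - `|x ord0 i - y ord0 i| `^ (2 * H i))).

(* v is an (N,d)-fractional Brownian sheet with Hurst parameter H on the
   probability space (T, P): a continuous centered Gaussian field indexed by
   R^N_+ with values in R^d (v x j w = j-th component of v(x) at outcome w)
   and covariance E(v_j(x) v_l(y)) = delta_{jl} prod_i (...). *)
Definition is_fbs (dm : measure_display) (T : measurableType dm)
    (R : realType) (P : probability T R) (N dd : nat) (H : 'I_N -> R)
    (v : 'rV[R]_N -> 'I_dd -> T -> R) : Prop :=
  [/\
      forall (w : T) (j : 'I_dd), {within @orthant R N, continuous (fun x => v x j w)},
      (* centered, jointly Gaussian: every finite linear combination of the
         field's coordinates is a centered Gaussian random variable *)
      forall (n : nat) (xs : 'I_n -> 'rV[R]_N) (js : 'I_n -> 'I_dd) (c : 'I_n -> R),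
        (forall k, @orthant R N (xs k)) ->
        exists s : R, gaussian_rv P (fun w => \sum_(k < n) c k * v (xs k) (js k) w) 0 s
    &
      forall (x y : 'rV[R]_N) (j l : 'I_dd), @orthant R N x -> @orthant R N y ->
        ('E_P[fun w => (v x j w * v y l w)%R] =
           ((if j == l then 1 else 0) * fbs_cov H x y)%:E)%E].

From HB Require Import structures.
From mathcomp Require Import all_boot all_order all_algebra.
From mathcomp Require Import all_classical all_reals all_analysis.
From mathcomp Require Import ring lra measurable_realfun.
Set Implicit Arguments. Unset Strict Implicit.
Import Order.TTheory GRing.Theory Num.Theory.
Import numFieldNormedType.Exports.
Local Open Scope classical_set_scope.
Local Open Scope ring_scope.

(* Integrating the a.s. null combination sum_k a_k v_1(x^k) against v_1(y)
   shows that F(y) = sum_k a_k prod_i K_i(x^k_i, y_i) vanishes on the orthant,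
   where K_i(c, y) = (|c|^(2H_i) + |y|^(2H_i) - |c - y|^(2H_i)) / 2.  Fix j and
   apply at x^j the second difference of step h in every coordinate, divided by
   prod_i h^(2H_i): this is 0 for small h > 0.  In one variable the normalised
   second difference of K(c, .) at x > 0 tends to -1 if c = x (the kink of
   |c - y|^(2H) at y = c) and to 0 otherwise (|.|^(2H) is C^2 away from 0 and
   2H < 2).  In the limit only the term k = j survives: (-1)^N a_j = 0. *)

Section SecondDifference.
Variable R : realType.

Lemma le0_ger_powR (a b p : R) : 0 < a -> a <= b -> p <= 0 -> b `^ p <= a `^ p.
Proof.
move=> a_gt0 ab p_le0; have b_gt0 : 0 < b by apply: lt_le_trans ab.
rewrite -(opprK p); have : 0 <= - p by rewrite oppr_ge0.
move: (- p) => q q_ge0; rewrite !powRN lef_pV2 ?posrE ?powR_gt0//.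
by apply: (ge0_ler_powR q_ge0); rewrite // nnegrE ltW.
Qed.

Lemma MVT_powR (p a b : R) : 0 < a -> a <= b ->
  exists2 c, c \in `[a, b] & b `^ p - a `^ p = p * c `^ (p - 1) * (b - a).
Proof.
move=> a_gt0 ab.
have [||c cab ->] :=
  MVT_segment (f := fun y => y `^ p) (df := fun y => p * y `^ (p - 1)) ab.
- move=> x; rewrite in_itv/= => /andP[ax _].
  by apply: is_derive1_powR; apply: lt_trans ax.
- apply: derivable_within_continuous => x; rewrite in_itv/= => /andP[ax _].
  by apply: derivable_powR; rewrite in_itv/= andbT; apply: lt_le_trans ax.
- by exists c.
Qed.

Definition second_diff (f : R -> R) (t h : R) := f (t + h) + f (t - h) - 2 * f t.

Lemma second_diff_powR_le (al t h : R) : 0 < h -> 2 * h <= t -> al <= 2 ->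
  `|second_diff (fun y => y `^ al) t h|
    <= 2 * `|al * (al - 1)| * (t / 2) `^ (al - 2) * h ^+ 2.
Proof.
move=> h_gt0 ht al_le2; have t_gt0 : 0 < t by lra.
have -> : second_diff (fun y => y `^ al) t h
    = ((t + h) `^ al - t `^ al) - (t `^ al - (t - h) `^ al).
  by rewrite /second_diff; ring.
have [th_gt0 th_le_t t_le_th] : [/\ 0 < t - h, t - h <= t & t <= t + h] by split; lra.
have [x1 + ->] := MVT_powR al t_gt0 t_le_th.
have [x2 + ->] := MVT_powR al th_gt0 th_le_t.
rewrite !in_itv/= => /andP[x2_ge x2_le] /andP[x1_ge x1_le].
have [x2_gt0 x21] : 0 < x2 /\ x2 <= x1 by split; lra.
have [y + E] := MVT_powR (al - 1) x2_gt0 x21.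
rewrite in_itv/= => /andP[x2y yx1].
have -> : al * x1 `^ (al - 1) * (t + h - t) - al * x2 `^ (al - 1) * (t - (t - h))
    = al * h * (x1 `^ (al - 1) - x2 `^ (al - 1)) by ring.
rewrite E -addrA -opprD -[1 + 1]/(2%:R).
have y_ge : t / 2 <= y by lra.
have -> : al * h * ((al - 1) * y `^ (al - 2) * (x1 - x2))
    = al * (al - 1) * y `^ (al - 2) * (h * (x1 - x2)) by ring.
have y_pow : y `^ (al - 2) <= (t / 2) `^ (al - 2).
  by apply: le0_ger_powR; lra.
have hx_ge0 : 0 <= h * (x1 - x2) by apply: mulr_ge0; lra.
have hx_le : h * (x1 - x2) <= 2 * h ^+ 2.
  rewrite expr2 mulrA (mulrC 2 h) -mulrA; apply: ler_wpM2l; lra.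
rewrite normrM (normrM (al * (al - 1))) (ger0_norm (powR_ge0 _ _)) (ger0_norm hx_ge0).
rewrite [X in _ <= X](_ : _ = `|al * (al - 1)| * (t / 2) `^ (al - 2) * (2 * h ^+ 2)).
  by apply: ler_pM => //; rewrite ?mulr_ge0 ?powR_ge0 ?ler_wpM2l.
ring.
Qed.

Lemma second_diff_even (f : R -> R) (t h : R) : (forall y, f (- y) = f y) ->
  second_diff f (- t) h = second_diff f t h.
Proof.
move=> f_even; rewrite /second_diff f_even.
rewrite -[f (- t + h)]f_even -[f (- t - h)]f_even !opprD !opprK; ring.
Qed.

Lemma second_diff_normpowR_cvg (al t : R) : t != 0 -> 0 < al < 2 ->
  second_diff (fun y => `|y| `^ al) t h / h `^ al @[h --> 0^'+] --> 0.
Proof.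
wlog t_gt0 : t / 0 < t.
  move=> wlog_t t_neq0 al_bnd.
  have [t_lt0|t_gt0|t_eq0] := ltgtP t 0; last by rewrite t_eq0 eqxx in t_neq0.
  - have normpowR_even (y : R) : `|- y| `^ al = `|y| `^ al by rewrite normrN.
    rewrite -[t]opprK.
    under eq_cvg do rewrite (second_diff_even _ _ normpowR_even).
    by apply: wlog_t; rewrite ?oppr_gt0 ?oppr_eq0.
  - exact: wlog_t.
move=> _ /andP[al_gt0 al_lt2].
set C := 2 * `|al * (al - 1)| * (t / 2) `^ (al - 2).
have bound_cvg : C * h `^ (2 - al) @[h --> 0^'+] --> 0.
  by rewrite -[X in _ --> X](mulr0 C); apply: cvgMl_tmp; apply: powR_cvg0; lra.
have lower_cvg : - (C * h `^ (2 - al)) @[h --> 0^'+] --> 0.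
  by rewrite -[X in _ --> X]oppr0; apply: cvgN.
apply: (squeeze_cvgr _ lower_cvg bound_cvg); near=> h.
have h_gt0 : 0 < h by near: h; exact: nbhs_right_gt.
have ht : 2 * h <= t.
  near: h; exists (t / 2) => /=; first by rewrite divr_gt0.
  by move=> y /= + y_gt0; rewrite distrC subr0 gtr0_norm // => yt; lra.
have -> : second_diff (fun y => `|y| `^ al) t h = second_diff (fun y => y `^ al) t h.
  by rewrite /second_diff !gtr0_norm //; lra.
rewrite -ler_norml normrM normfV (ger0_norm (powR_ge0 _ _)) ler_pdivrMr ?powR_gt0//.
apply: (le_trans (second_diff_powR_le h_gt0 ht (ltW al_lt2))).
rewrite -[C * _ * _]mulrA -powRD; last by rewrite (gt_eqF h_gt0) implybT.
by rewrite subrK powR_mulrn // ltW.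
Unshelve. all: by end_near. Qed.

(* [fbs_cov H x y] is convertible to [\prod_i fbm_cov (2 * H i) (x i) (y i)]. *)
Definition fbm_cov (al c y : R) : R :=
  2^-1 * (`|c| `^ al + `|y| `^ al - `|c - y| `^ al).

Lemma second_diff_fbm_cov (al c x h : R) :
  second_diff (fbm_cov al c) x h = 2^-1 *
    (second_diff (fun y => `|y| `^ al) x h - second_diff (fun y => `|y| `^ al) (c - x) h).
Proof.
rewrite /second_diff /fbm_cov.
have -> : c - (x + h) = c - x - h by ring.
have -> : c - (x - h) = c - x + h by ring.
ring.
Qed.

Lemma second_diff_normpowR0 (al h : R) : al != 0 -> 0 < h ->
  second_diff (fun y => `|y| `^ al) 0 h = 2 * h `^ al.
Proof.
move=> al_neq0 h_gt0.
by rewrite /second_diff !add0r normrN normr0 powR0 // gtr0_norm //; ring.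
Qed.

Lemma second_diff_fbm_cov_cvg (al c x : R) : 0 < al < 2 -> x != 0 ->
  second_diff (fbm_cov al c) x h / h `^ al @[h --> 0^'+]
    --> (if c == x then -1 else 0 : R).
Proof.
move=> al_bnd x_neq0.
have al_neq0 : al != 0 by case/andP: al_bnd => al_gt0 _; rewrite gt_eqF.
have x_cvg := second_diff_normpowR_cvg x_neq0 al_bnd.
pose D t h := second_diff (fun y => `|y| `^ al) t h / h `^ al.
have -> : (fun h => second_diff (fbm_cov al c) x h / h `^ al)
    = (fun h => 2^-1 * (D x h - D (c - x) h)).
  by apply/funext => h; rewrite second_diff_fbm_cov -mulrA mulrBl.
case: eqP => [->|/eqP c_neq_x].
- have zero_cvg : D (x - x) h @[h --> 0^'+] --> (2 : R).
    apply: cvg_near_cst; near=> h.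
    have h_gt0 : 0 < h by near: h; exact: nbhs_right_gt.
    by rewrite /D subrr second_diff_normpowR0 // mulfK // gt_eqF // powR_gt0.
  rewrite -[X in _ --> X](_ : 2^-1 * (0 - 2) = -1); last by lra.
  exact: cvgMl_tmp (cvgB x_cvg zero_cvg).
- have cx_cvg : D (c - x) h @[h --> 0^'+] --> 0.
    by apply: second_diff_normpowR_cvg; rewrite // subr_eq0.
  rewrite -[X in _ --> X](_ : 2^-1 * (0 - 0) = 0); last by ring.
  exact: cvgMl_tmp (cvgB x_cvg cx_cvg).
Unshelve. all: by end_near. Qed.

End SecondDifference.

Section MixedSecondDifference.
Variable R : realType.

(* The second difference as the three-point stencil with nodes -1, 0, 1 and
   weights 1, -2, 1: a product of second differences over the coordinates then
   expands into a sum over stencil choices s : 'I_N -> 'I_3. *)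
Definition stencil_node (e : 'I_3) : R := e%:R - 1.
Definition stencil_weight (e : 'I_3) : R := if val e == 1%N then -2 else 1.

Lemma second_diff_stencil (f : R -> R) (t h : R) :
  second_diff f t h = \sum_(e < 3) stencil_weight e * f (t + stencil_node e * h).
Proof.
rewrite !big_ord_recr big_ord0 /= /stencil_weight /stencil_node /= add0r.
rewrite -[1%:R]/1 -[2%:R]/2 subrr mul0r addr0 sub0r mulN1r mul1r.
rewrite (_ : 2 - 1 = 1 :> R) ?mul1r; last by ring.
by rewrite /second_diff; ring.
Qed.

Lemma sum_prod_second_diff (m N : nat) (a : 'I_m -> R) (g : 'I_m -> 'I_N -> R -> R)
    (x : 'I_N -> R) (h : R) :
  \sum_(k < m) a k * \prod_(i < N) second_diff (g k i) (x i) h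
  = \sum_(s : {ffun 'I_N -> 'I_3}) (\prod_(i < N) stencil_weight (s i)) *
      \sum_(k < m) a k * \prod_(i < N) g k i (x i + stencil_node (s i) * h).
Proof.
under eq_bigr => k _.
  rewrite (eq_bigr _ (fun i _ => second_diff_stencil _ _ _)).
  rewrite bigA_distr_bigA mulr_sumr.
  over.
rewrite exchange_big; apply: eq_bigr => s _; rewrite mulr_sumr.
by apply: eq_bigr => k _; rewrite big_split /= mulrCA.
Qed.

Lemma sum_prod_second_diff_eq0 (m N : nat) (a : 'I_m -> R)
    (g : 'I_m -> 'I_N -> R -> R) (x : 'rV[R]_N) (h : R) :
  (forall y, orthant y -> \sum_(k < m) a k * \prod_(i < N) g k i (y ord0 i) = 0) ->
  0 <= h -> (forall i, h <= x ord0 i) ->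
  \sum_(k < m) a k * \prod_(i < N) second_diff (g k i) (x ord0 i) h = 0.
Proof.
move=> F_eq0 h_ge0 h_le_x; rewrite sum_prod_second_diff; apply: big1 => s _.
pose y : 'rV[R]_N := \row_i (x ord0 i + stencil_node (s i) * h).
have y_orthant : orthant y.
  move=> i; rewrite mxE /stencil_node.
  have s_le2 : (s i)%:R <= 2 :> R by rewrite ler_nat -ltnS.
  have := h_le_x i; have := ler0n R (s i); nra.
have := F_eq0 y y_orthant; under eq_bigr do under eq_bigr do rewrite mxE.
by move=> ->; rewrite mulr0.
Qed.

Lemma sum_prod_coord_indicator (m N : nat) (a : 'I_m -> R) (X : 'I_m -> 'rV[R]_N)
    (c : R) j :
  injective X ->
  \sum_(k < m) a k * \prod_(i < N) (if X k ord0 i == X j ord0 i then c else 0)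
  = a j * c ^+ N.
Proof.
move=> X_inj; rewrite (bigD1 j) //= [X in _ + X]big1 ?addr0 => [|k k_neq_j].
  by under eq_bigr do rewrite eqxx; rewrite prodr_const card_ord.
have [i Xki_neq] : exists i, X k ord0 i != X j ord0 i.
  apply/existsP; apply: contraR k_neq_j; rewrite negb_exists => /forallP Xkj.
  apply/eqP/X_inj/matrixP => r i; rewrite (ord1 r).
  by apply/eqP; rewrite -[_ == _]negbK Xkj.
by rewrite (bigD1 i) //= (negbTE Xki_neq) mul0r mulr0.
Qed.

Lemma fbm_cov_prod_lin_indep (N m : nat) (al : 'I_N -> R) (X : 'I_m -> 'rV[R]_N)
    (a : 'I_m -> R) :
  (forall i, 0 < al i < 2) -> injective X -> (forall k i, 0 < X k ord0 i) ->
  (forall y, orthant y ->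
     \sum_(k < m) a k * \prod_(i < N) fbm_cov (al i) (X k ord0 i) (y ord0 i) = 0) ->
  forall j, a j = 0.
Proof.
move=> al_bnd X_inj X_gt0 F_eq0 j; set x := X j.
pose S h := \sum_(k < m) a k *
  \prod_(i < N) (second_diff (fbm_cov (al i) (X k ord0 i)) (x ord0 i) h / h `^ al i).
have S_cvg : S h @[h --> 0^'+]
    --> \sum_(k < m) a k * \prod_(i < N) (if X k ord0 i == x ord0 i then -1 else 0).
  apply: cvg_big => [|k _]; first exact: add_continuous.
  apply: cvgMl_tmp; apply: cvg_big => [|i _]; first exact: mul_continuous.
  by apply: second_diff_fbm_cov_cvg; rewrite ?al_bnd ?gt_eqF ?X_gt0.
have S_eq0 : S h @[h --> 0^'+] --> 0.
  apply: cvg_near_cst; near=> h.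
  have h_gt0 : 0 < h by near: h; exact: nbhs_right_gt.
  have h_le_x : forall i, h <= x ord0 i.
    near: h; apply: filter_forall => i; exists (x ord0 i) => /=; first exact: X_gt0.
    by move=> y /= + y_gt0; rewrite distrC subr0 gtr0_norm // => /ltW.
  have -> : S h = (\sum_(k < m) a k *
      \prod_(i < N) second_diff (fbm_cov (al i) (X k ord0 i)) (x ord0 i) h)
      / \prod_(i < N) h `^ al i.
    by rewrite /S mulr_suml; apply: eq_bigr => k _; rewrite big_split /= prodfV mulrA.
  by rewrite sum_prod_second_diff_eq0 ?mul0r // ltW.
have := norm_cvg_unique (FF := fmap_proper_filter S (at_right_proper_filter 0))
  S_cvg S_eq0.
rewrite sum_prod_coord_indicator // => /eqP.
by rewrite mulf_eq0 signr_eq0 orbF => /eqP.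
Unshelve. all: by end_near. Qed.

End MixedSecondDifference.

Section CovarianceOfNullCombination.
Context (d : measure_display) (T : measurableType d) (R : realType).
Variables (P : probability T R) (I : Type) (O : set I).
Variables (V : I -> T -> R) (C : I -> I -> R).
Hypothesis V_measurable : forall x, O x -> measurable_fun setT (V x).
Hypothesis V_cov : forall x y, O x -> O y ->
  ('E_P[fun w => (V x w * V y w)%R] = (C x y)%:E)%E.

Let VV_measurable x y : O x -> O y -> measurable_fun setT (fun w => V x w * V y w).
Proof. by move=> Ox Oy; apply: measurable_funM; apply: V_measurable. Qed.

Let VV_integral x y : O x -> O y ->
  (\int[P]_w (V x w * V y w)%:E = (C x y)%:E)%E.
Proof. by move=> Ox Oy; rewrite -V_cov // unlock. Qed.

Let VV_integrable x y : O x -> O y ->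
  P.-integrable setT (EFin \o (fun w => V x w * V y w)).
Proof.
move=> Ox Oy; apply/integrableP; split; first exact/measurable_EFinP/VV_measurable.
by rewrite /= integral_fin_num_abs ?VV_integral //; apply: VV_measurable.
Qed.

Lemma sum_cov_eq0_of_ae (m : nat) (X : 'I_m -> I) (a : 'I_m -> R) :
  (forall k, O (X k)) -> {ae P, forall w, \sum_(k < m) a k * V (X k) w = 0} ->
  forall y, O y -> \sum_(k < m) a k * C (X k) y = 0.
Proof.
move=> OX null_comb y Oy.
have Z_measurable : measurable_fun setT (fun w => \sum_(k < m) a k * V (X k) w).
  by apply: measurable_sum => k; apply: measurable_funM => //; apply: V_measurable.
have ZV_integral0 : (\int[P]_w ((\sum_(k < m) a k * V (X k) w) * V y w)%:E = 0)%E.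
  rewrite (@ae_eq_integral _ _ _ P setT (cst 0%E)) ?integral0 //.
  - by apply/measurable_EFinP/measurable_funM => //; apply: V_measurable.
  - by apply: filterS null_comb => w /= ->; rewrite mul0r.
suff : (\int[P]_w ((\sum_(k < m) a k * V (X k) w) * V y w)%:E
    = (\sum_(k < m) a k * C (X k) y)%:E)%E by rewrite ZV_integral0 => -[].
under eq_integral => w _ do rewrite mulr_suml -sumEFin.
rewrite integral_sum //; last first.
  move=> k; under eq_fun do rewrite -mulrA EFinM.
  by apply: integrableZl => //; exact: VV_integrable.
rewrite -sumEFin; apply: eq_bigr => k _.
under eq_integral => w _ do rewrite -mulrA EFinM.
by rewrite integralZl ?VV_integral ?VV_integrable.
Qed.

End CovarianceOfNullCombination.

Theorem lemma5p3 (R : realType) (dm : measure_display) (T : measurableType dm)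
    (P : probability T R) (N dd : nat) (hN : (0 < N)%N) (hd : (0 < dd)%N)
    (H : 'I_N -> R) (hH : forall i, 0 < H i < 1)
    (v : 'rV[R]_N -> 'I_dd -> T -> R) (hv : is_fbs P H v)
    (m : nat) (X : 'I_m -> 'rV[R]_N) (hXinj : injective X)
    (hXpos : forall k i, 0 < X k ord0 i) :
  (* v_1(x^1), ..., v_1(x^m) are linearly independent random variables *)
  forall a : 'I_m -> R,
    {ae P, forall w, \sum_(k < m) a k * v (X k) (Ordinal hd) w = 0} ->
    forall k, a k = 0.
Proof.
move=> a null_comb; case: hv => _ v_gaussian v_cov.
have v_measurable x : orthant x -> measurable_fun setT (v x (Ordinal hd)).
  move=> Ox; have [s [_ + _]] :=
    v_gaussian 1%N (fun=> x) (fun=> Ordinal hd) (fun=> 1) (fun=> Ox).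
  by under eq_fun do rewrite big_ord1 mul1r.
have v_cov1 x y : orthant x -> orthant y ->
    ('E_P[fun w => (v x (Ordinal hd) w * v y (Ordinal hd) w)%R]
      = (fbs_cov H x y)%:E)%E.
  by move=> Ox Oy; rewrite v_cov // eqxx mul1r.
have X_orthant k : orthant (X k) by move=> i; apply: ltW.
apply: (fbm_cov_prod_lin_indep (al := fun i => 2 * H i)) hXinj hXpos _.
- by move=> i; have /andP[H_gt0 H_lt1] := hH i; apply/andP; split; lra.
- by apply: (sum_cov_eq0_of_ae v_measurable v_cov1).
Qed.
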